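(* Let $m,n\ge 1$. Under optimal play, the Sign Game on the complete bipartite graph $K_{m,n}$ is won by Player 2 when both $m$ and $n$ are odd, and results in a draw when at least one of $m,n$ is even.
   Context: The Sign Game on a finite simple undirected graph $G$: two players, Player P and Player N, alternate turns; the player who moves first is called Player 1 and the other Player 2 (either of P, N may be Player 1). On a turn, a player chooses a vertex of $G$ not yet assigned a value and assigns it $+1$ or $-1$. The game ends when every vertex has been assigned. The score of an edge $uv$ is the product of the values of $u$ and $v$, and the score $s(G)$ of the game is the sum of the scores of all edges. Player P wins if $s(G)>0$, Player N wins if $s(G)<0$, and the game is a draw if $s(G)=0$. ''Under optimal play'' means both players play optimally, each with primary goal of winning and secondary goal of at least drawing; the result is the outcome of this finite perfect-information game under such play. $K_{m,n}$ is the complete bipartite graph with parts of sizes $m$ and $n$, every vertex of one part adjacent to every vertex of the other and no other edges. *)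

From mathcomp Require Import all_boot all_order all_algebra.
Set Implicit Arguments. Unset Strict Implicit. Unset Printing Implicit Defensive.
Import Order.TTheory GRing.Theory Num.Theory.
Local Open Scope ring_scope.

(* A finite simple graph: vertex type T : finType, adjacency e : rel T
   (assumed symmetric and irreflexive). *)

Section SignGame.
Variables (T : finType) (e : rel T).

Definition edges : {set {set T}} := [set [set u; v] | u in T, v in T & e u v].

Definition assignment := {ffun T -> option bool}.

Definition spin (o : option bool) : int :=
  match o with Some true => 1 | Some false => -1 | None => 0 end.

Definition score (s : assignment) : int :=
  \sum_(E in edges) \prod_(x in E) spin (s x).

Definition empty_assignment : assignment := [ffun _ => None].

Definition assign (s : assignment) (v : T) (b : bool) : assignment :=
  [ffun x => if x == v then Some b else s x].

(* Minimax value of the game from state s, with the outcome encoded as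
   +1 (P wins), 0 (draw), -1 (N wins), i.e. Num.sg of the final score.
   P maximizes, N minimizes (win > draw > loss, which is exactly the
   primary/secondary goals of the paper).  [pturn] is true iff P is to move.
   k is fuel; #|T| suffices. *)
Fixpoint value (k : nat) (s : assignment) (pturn : bool) : int :=
  match k with
  | 0%N => Num.sg (score s)
  | k'.+1 =>
    if [exists v, s v == None] then
      if pturn then
        \big[Num.max/-1]_(v | s v == None) \big[Num.max/-1]_(b : bool)
           value k' (assign s v b) false
      else
        \big[Num.min/1]_(v | s v == None) \big[Num.min/1]_(b : bool)
           value k' (assign s v b) true
    else Num.sg (score s)
  end.

(* Outcome under optimal play, starting from the empty assignment;
   [P_first] is true iff Player P is Player 1. *)
Definition sign_game_outcome (P_first : bool) : int :=
  value #|T| empty_assignment P_first.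

End SignGame.

Definition Kmn_adj (m n : nat) : rel ('I_m + 'I_n)%type :=
  fun x y => match x, y with
             | inl _, inr _ | inr _, inl _ => true
             | _, _ => false
             end.
Arguments Kmn_adj m n : clear implicits.
Arguments sign_game_outcome {T} e P_first.

From mathcomp Require Import all_boot all_order all_algebra zify.
Import Order.TTheory GRing.Theory Num.Theory.
Set Implicit Arguments.
Unset Strict Implicit.
Unset Printing Implicit Defensive.
Local Open Scope ring_scope.

(* On K_{m,n} the score is a * b, where a and b are the sums of the values on
   the two sides, so a strategy only has to look at the position
   (a, free vertices of side A, b, free vertices of side B).  A player secures
   an outcome by restoring an invariant on positions with every reply.
   When m and n are odd, Player 2 keeps (a, b) = (0, 0) while both free counts
   are odd, and b = +-a = +-1 with the sign she wants while both are even; at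
   the end a * b is that sign.  Otherwise each player can keep (a, b) in a
   closed quadrant on which a * b has her preferred sign, so nobody loses. *)

Definition bsign (b : bool) : int := if b then 1 else -1.

Lemma spin_Some b : spin (Some b) = bsign b.
Proof. by case: b. Qed.

Lemma le_bsign_sgr p (d x : int) :
  0 <= d <= 1 -> d <= bsign p * x -> d <= bsign p * Num.sg x.
Proof. by case: p; rewrite /= ?mul1r ?mulN1r; case: (sgrP x); lia. Qed.

Definition turn_op (t : bool) : int -> int -> int := if t then Num.max else Num.min.
Definition turn_unit (t : bool) : int := if t then -1 else 1.

Section TurnOp.
Variables (p : bool) (d : int) (I : finType) (P : pred I) (F : I -> int).

Lemma big_turn_op_own i : P i -> d <= bsign p * F i ->
  d <= bsign p * \big[turn_op p/turn_unit p]_(j | P j) F j.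
Proof.
by case: p => Pi; rewrite (bigD1 i) //= ?mul1r ?mulN1r ?oppr_min le_max => ->.
Qed.

Lemma big_turn_op_opponent : d <= 1 -> (forall i, P i -> d <= bsign p * F i) ->
  d <= bsign p * \big[turn_op (~~ p)/turn_unit (~~ p)]_(i | P i) F i.
Proof.
move=> d_le1 FP; apply: (big_ind (fun x => d <= bsign p * x)) => //.
- by case: p.
- by case: p => x y; rewrite /= ?mul1r ?mulN1r ?oppr_max le_min => -> ->.
Qed.

End TurnOp.

Section Strategy.
Variables (T : finType) (e : rel T).
Implicit Types s : assignment T.

Definition free s := [set v | s v == None].

Lemma card_free_assign s v b : s v = None -> #|free (assign s v b)| = #|free s|.-1.
Proof.
move=> sv; rewrite [in RHS](cardsD1 v) inE sv eqxx /=.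
apply: eq_card => w; rewrite !inE ffunE.
by case: (w =P v) => [->|]; rewrite ?sv.
Qed.

Lemma valueS k s t : value e k.+1 s t =
  if [exists v, s v == None] then
    \big[turn_op t/turn_unit t]_(v | s v == None) \big[turn_op t/turn_unit t]_(b : bool)
      value e k (assign s v b) (~~ t)
  else Num.sg (score e s).
Proof. by case: t. Qed.

Lemma value_bounds k s t : -1 <= value e k s t <= 1.
Proof.
have sgr_bounds (x : int) : -1 <= Num.sg x <= 1 by case: (sgrP x).
have turn_op_bounds t' (x y : int) :
    -1 <= x <= 1 -> -1 <= y <= 1 -> -1 <= turn_op t' x y <= 1.
  by case: t'; rewrite /= ?le_max ?ge_max ?le_min ?ge_min; lia.
elim: k s t => [|k IH] s t; first exact: sgr_bounds.
rewrite valueS; case: ifP => _; last exact: sgr_bounds.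
pose bounded (x : int) := -1 <= x <= 1.
apply: (big_ind bounded) => [|x y|v _]; [by case: t | exact: turn_op_bounds |].
by apply: (big_ind bounded) => [|x y|b _]; [case: t | exact: turn_op_bounds | exact: IH].
Qed.

Lemma sign_game_outcome_bounds t : -1 <= sign_game_outcome e t <= 1.
Proof. exact: value_bounds. Qed.

(* The strategist is P iff [p], and she aims at an outcome of at least [d]
   seen from her side; [Inv] describes the states where her opponent is to
   move, [safe] those where she is. *)
Variables (p : bool) (d : int) (Inv : assignment T -> Prop).
Hypothesis d_le1 : d <= 1.

Definition secured s := d <= bsign p * Num.sg (score e s).

Definition safe s := (~~ [exists v, s v == None] /\ secured s) \/
  exists v b, s v = None /\ Inv (assign s v b).

Hypothesis Inv_secured : forall s, Inv s -> ~~ [exists v, s v == None] -> secured s.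
Hypothesis Inv_reply : forall s v b, Inv s -> s v = None -> safe (assign s v b).

Lemma value_secured k s : (#|free s| <= k)%N ->
  (Inv s -> d <= bsign p * value e k s (~~ p)) /\
  (safe s -> d <= bsign p * value e k s p).
Proof.
have full_secured s' : ~~ [exists v, s' v == None] ->
    (Inv s' -> secured s') /\ (safe s' -> secured s').
  move=> full; split=> [/Inv_secured -> // | [[] // | [v [b [sv _]]]]].
  by case/existsP: full; exists v; rewrite sv.
elim: k s => [|k IH] s free_le.
  apply: full_secured; apply/existsP => -[v sv].
  by move: free_le; rewrite leqn0 => /eqP/cards0_eq/setP/(_ v); rewrite !inE sv.
have [has_free|full] := boolP [exists v, s v == None]; last first.
  by rewrite !valueS (negbTE full); exact: full_secured.
have free_assign_le v b : s v = None -> (#|free (assign s v b)| <= k)%N.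
  by move=> sv; rewrite card_free_assign //; lia.
rewrite !valueS negbK has_free.
split=> [I | [[/negP] // | [v [b [sv I]]]]].
  apply: big_turn_op_opponent => // v /eqP sv; apply: big_turn_op_opponent => // b _.
  exact: (proj2 (IH _ (free_assign_le v b sv))) (Inv_reply b I sv).
apply: (big_turn_op_own (i := v)); first by rewrite sv.
apply: (big_turn_op_own (i := b)) => //.
exact: (proj1 (IH _ (free_assign_le v b sv))) I.
Qed.

End Strategy.

Section Part.
Variables (T I : finType) (f : I -> T).
Implicit Types s : assignment T.

Definition part_sum s := \sum_i spin (s (f i)).
Definition part_free s := #|[set i | s (f i) == None]|.

Lemma part_free_gt0 s : (0 < part_free s)%N = [exists i, s (f i) == None].
Proof. by apply/card_gt0P/existsP => -[i]; rewrite ?inE; exists i; rewrite ?inE. Qed.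

Lemma part_sum_empty : part_sum (empty_assignment T) = 0.
Proof. by apply: big1 => i _; rewrite ffunE. Qed.

Lemma part_free_empty : part_free (empty_assignment T) = #|I|.
Proof. by apply: eq_card => i; rewrite !inE ffunE. Qed.

Lemma part_sum_assign_out s v b : (forall i, f i != v) ->
  part_sum (assign s v b) = part_sum s.
Proof. by move=> fv; apply: eq_bigr => i _; rewrite ffunE (negbTE (fv i)). Qed.

Lemma part_free_assign_out s v b : (forall i, f i != v) ->
  part_free (assign s v b) = part_free s.
Proof. by move=> fv; apply: eq_card => i; rewrite !inE ffunE (negbTE (fv i)). Qed.

Hypothesis f_inj : injective f.

Lemma part_sum_assign s i b : s (f i) = None ->
  part_sum (assign s (f i) b) = part_sum s + bsign b.
Proof.
move=> sfi; rewrite /part_sum (bigD1 i) //= [in RHS](bigD1 i) //= ffunE eqxx sfi.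
rewrite add0r addrC spin_Some; congr (_ + _); apply: eq_bigr => j ji.
by rewrite ffunE (inj_eq f_inj) (negbTE ji).
Qed.

Lemma part_free_assign s i b : s (f i) = None ->
  part_free (assign s (f i) b) = (part_free s).-1.
Proof.
move=> sfi; rewrite /part_free [in RHS](cardsD1 i) inE sfi eqxx /=.
apply: eq_card => j; rewrite !inE ffunE (inj_eq f_inj).
by case: (j =P i) => [->|]; rewrite ?sfi.
Qed.

End Part.

Section CompleteBipartite.
Variables m n : nat.
Local Notation T := ('I_m + 'I_n)%type.
Local Notation K := (Kmn_adj m n).
Implicit Types s : assignment T.

Lemma edges_Kmn : edges K =
  [set [set (inl ij.1 : T); inr ij.2] | ij in [set: 'I_m * 'I_n]].
Proof.
apply/setP=> E; apply/imset2P/imsetP => [[u v _]|[[i j] _ ->]].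
  rewrite inE; case: u => [i|j]; case: v => [i'|j'] //= _ ->.
    by exists (i, j'); rewrite ?in_setT.
  by exists (i', j); rewrite ?in_setT //= setUC.
by exists (inl i : T) (inr j : T); rewrite ?inE.
Qed.

Lemma score_Kmn s : score K s = part_sum inl s * part_sum inr s.
Proof.
rewrite /score edges_Kmn big_imset /=; last first.
  move=> [i j] [i' j'] _ _ /= /setP E.
  have := E (inl i); have := E (inr j); rewrite !inE /= !eqxx /=.
  by move=> /esym /eqP [->] /esym /orP [/eqP [->] | ].
rewrite big_distrlr pair_bigA /=; apply: eq_big => [ij|[i j] _]; first by rewrite in_setT.
by rewrite big_setU1 ?inE //= big_set1.
Qed.

Lemma Kmn_has_free s : [exists v, s v == None] =
  (0 < part_free inl s)%N || (0 < part_free inr s)%N.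
Proof.
rewrite !part_free_gt0; apply/existsP/orP => [[[i|j] sv]|[]/existsP[x sx]].
- by left; apply/existsP; exists i.
- by right; apply/existsP; exists j.
- by exists (inl x).
- by exists (inr x).
Qed.

Definition at_position (Q : int -> nat -> int -> nat -> Prop) s :=
  Q (part_sum inl s) (part_free inl s) (part_sum inr s) (part_free inr s).

Lemma at_position_empty Q : at_position Q (empty_assignment T) = Q 0 m 0 n.
Proof. by rewrite /at_position !part_sum_empty !part_free_empty !card_ord. Qed.

Lemma at_position_assign_inl Q s i b : s (inl i) = None ->
  at_position Q (assign s (inl i) b) =
  Q (part_sum inl s + bsign b) (part_free inl s).-1 (part_sum inr s) (part_free inr s).
Proof.
move=> si; rewrite /at_position (part_sum_assign (@inl_inj _ _)) //.
by rewrite (part_free_assign (@inl_inj _ _)) // part_sum_assign_out // part_free_assign_out.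
Qed.

Lemma at_position_assign_inr Q s j b : s (inr j) = None ->
  at_position Q (assign s (inr j) b) =
  Q (part_sum inl s) (part_free inl s) (part_sum inr s + bsign b) (part_free inr s).-1.
Proof.
move=> sj; rewrite /at_position (part_sum_assign (@inr_inj _ _)) //.
by rewrite (part_free_assign (@inr_inj _ _)) // part_sum_assign_out // part_free_assign_out.
Qed.

End CompleteBipartite.

Definition safe_pos (p : bool) (d : int) (Inv : int -> nat -> int -> nat -> Prop)
    a (ra : nat) b (rb : nat) :=
  [/\ ra = 0%N, rb = 0%N & d <= bsign p * (a * b)] \/
  ((0 < ra)%N /\ exists t, Inv (a + bsign t) ra.-1 b rb) \/
  ((0 < rb)%N /\ exists t, Inv a ra (b + bsign t) rb.-1).

Lemma safe_pos_swap p d (Inv : int -> nat -> int -> nat -> Prop) a ra b rb :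
  (forall a ra b rb, Inv a ra b rb -> Inv b rb a ra) ->
  safe_pos p d Inv a ra b rb -> safe_pos p d Inv b rb a ra.
Proof.
move=> swap [[-> -> ab] | [[ra_gt0 [t I]] | [rb_gt0 [t I]]]].
- by left; split=> //; rewrite (mulrC b).
- by right; right; split=> //; exists t; apply: swap.
- by right; left; split=> //; exists t; apply: swap.
Qed.

Section KmnStrategy.
Variables (m n : nat) (p : bool) (d : int) (Inv : int -> nat -> int -> nat -> Prop).
Local Notation T := ('I_m + 'I_n)%type.
Local Notation K := (Kmn_adj m n).
Implicit Types s : assignment T.

Hypothesis d_range : 0 <= d <= 1.
Hypothesis Inv_swap : forall a ra b rb, Inv a ra b rb -> Inv b rb a ra.
Hypothesis Inv_final : forall a b, Inv a 0 b 0 -> d <= bsign p * (a * b).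
Hypothesis Inv_reply : forall a ra b rb t, Inv a ra b rb -> (0 < ra)%N ->
  safe_pos p d Inv (a + bsign t) ra.-1 b rb.

Lemma at_safe_pos_safe s : at_position (safe_pos p d Inv) s -> safe K p d (at_position Inv) s.
Proof.
case=> [[ra0 rb0 sec] | [[ra_gt0 [t I]] | [rb_gt0 [t I]]]].
- left; split; first by rewrite Kmn_has_free ra0 rb0.
  by rewrite /secured score_Kmn; apply: le_bsign_sgr.
- right; move: ra_gt0; rewrite part_free_gt0 => /existsP [i /eqP si].
  by exists (inl i), t; rewrite at_position_assign_inl.
- right; move: rb_gt0; rewrite part_free_gt0 => /existsP [j /eqP sj].
  by exists (inr j), t; rewrite at_position_assign_inr.
Qed.

Lemma at_Inv_secured s :
  at_position Inv s -> ~~ [exists v, s v == None] -> secured K p d s.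
Proof.
rewrite Kmn_has_free negb_or -!eqn0Ngt => I /andP[/eqP ra0 /eqP rb0].
rewrite /secured score_Kmn; apply: le_bsign_sgr => //.
by apply: Inv_final; move: I; rewrite /at_position ra0 rb0.
Qed.

Lemma at_Inv_reply s v b : at_position Inv s -> s v = None ->
  safe K p d (at_position Inv) (assign s v b).
Proof.
move=> I; case: v => [i|j] sv; apply: at_safe_pos_safe.
  rewrite at_position_assign_inl //; apply: Inv_reply => //.
  by rewrite part_free_gt0; apply/existsP; exists i; rewrite sv.
rewrite at_position_assign_inr //; apply: safe_pos_swap => //.
apply: Inv_reply; first exact: Inv_swap.
by rewrite part_free_gt0; apply/existsP; exists j; rewrite sv.
Qed.

Lemma Kmn_outcome_secured t :
  (if t == p then safe_pos p d Inv 0 m 0 n else Inv 0 m 0 n) ->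
  d <= bsign p * sign_game_outcome K t.
Proof.
have d_le1 : d <= 1 by case/andP: d_range.
have [from_inv from_safe] := value_secured d_le1 at_Inv_secured at_Inv_reply
  (max_card (mem (free (empty_assignment T)))).
case: (t =P p) => [-> start | t_ne_p start].
  by apply/from_safe/at_safe_pos_safe; rewrite at_position_empty.
have -> : t = ~~ p by case: t p t_ne_p {start} => [] [].
by apply: from_inv; rewrite at_position_empty.
Qed.

End KmnStrategy.

Section Pairing.
Variable p : bool.

Definition pairing_inv a (ra : nat) b (rb : nat) : Prop :=
  (a = 0 /\ b = 0 /\ odd ra /\ odd rb) \/
  exists t, a = bsign t /\ b = bsign p * bsign t /\ ~~ odd ra /\ ~~ odd rb.

Lemma pairing_inv_swap a ra b rb : pairing_inv a ra b rb -> pairing_inv b rb a ra.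
Proof.
case=> [[-> [-> [ora orb]]] | [t [-> [-> [era erb]]]]]; first by left.
by right; exists (p == t); split; case: p; case: t.
Qed.

Lemma pairing_final a b : pairing_inv a 0 b 0 -> 1 <= bsign p * (a * b).
Proof. by case=> [[_ [_ []]] | [t [-> [-> _]]]] //; case: p; case: t. Qed.

(* From (0, 0) Player 2 answers on the other side with the sign of her
   choice; otherwise she cancels the opponent's move on the same side. *)
Lemma pairing_reply a ra b rb t : pairing_inv a ra b rb -> (0 < ra)%N ->
  safe_pos p 1 pairing_inv (a + bsign t) ra.-1 b rb.
Proof.
case=> [[-> [-> [ora orb]]] | [e [-> [-> [era erb]]]]] ra_gt0.
  right; right; split; first by case: rb orb.
  exists (p == t); right; exists t; split; first by rewrite add0r.
  by split; [case: p; case: t | lia].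
right; left; split; first lia.
exists (~~ t); right; exists e; split; first by case: t; rewrite /= ?addrK ?subrK.
by split; [|lia].
Qed.

End Pairing.

Lemma pairing_secures_win m n p : odd m -> odd n ->
  1 <= bsign p * sign_game_outcome (Kmn_adj m n) (~~ p).
Proof.
move=> om on; apply: (Kmn_outcome_secured (Inv := pairing_inv p)).
- by [].
- exact: pairing_inv_swap.
- exact: pairing_final.
- exact: pairing_reply.
- by case: p; left.
Qed.

(* Once she has chosen an orientation [t] (before that a = b = 0), the
   strategist keeps [bsign t * a] and [bsign p * bsign t * b] nonnegative, and
   positive on a side with an odd number of free vertices, since that side may
   receive the last move. *)
Definition quadrant_inv p a (ra : nat) b (rb : nat) : Prop :=
  ~~ (odd ra && odd rb) /\
  ((a = 0 /\ b = 0) \/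
   exists t, 0 <= bsign t * a /\ 0 <= bsign p * bsign t * b /\
     (odd ra -> 1 <= bsign t * a) /\ (odd rb -> 1 <= bsign p * bsign t * b)).

Ltac destruct_all :=
  unfold bsign in *;
  repeat match goal with
  | H : exists _, _ |- _ => destruct H
  | H : _ /\ _ |- _ => destruct H
  | H : _ \/ _ |- _ => destruct H
  | b : bool |- _ => destruct b
  end.

Ltac solve_quadrant_inv :=
  split; [lia | first [ left; lia | right; exists true; lia | right; exists false; lia ]].

Lemma quadrant_inv_swap p a ra b rb : quadrant_inv p a ra b rb -> quadrant_inv p b rb a ra.
Proof. by rewrite /quadrant_inv => I; destruct_all; solve_quadrant_inv. Qed.

Lemma quadrant_final p a b : quadrant_inv p a 0 b 0 -> 0 <= bsign p * (a * b).
Proof. by rewrite /quadrant_inv => I; destruct_all; nia. Qed.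

Lemma quadrant_reply p a ra b rb s : quadrant_inv p a ra b rb -> (0 < ra)%N ->
  safe_pos p 0 (quadrant_inv p) (a + bsign s) ra.-1 b rb.
Proof.
rewrite /safe_pos => I ra_gt0.
case: (posnP ra.-1) => ?; case: (posnP rb) => ?; rewrite /quadrant_inv in I *; destruct_all;
  first [ left; split; [lia | lia | nia]
        | right; left; split;
            [lia | first [exists true; solve_quadrant_inv | exists false; solve_quadrant_inv]]
        | right; right; split;
            [lia | first [exists true; solve_quadrant_inv | exists false; solve_quadrant_inv]] ].
Qed.

Lemma quadrant_start p m n : (0 < m)%N -> (0 < n)%N -> ~~ (odd m && odd n) ->
  safe_pos p 0 (quadrant_inv p) 0 m 0 n.
Proof.
move=> m_gt0 n_gt0 not_odd; case: (boolP (odd n)) => on.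
  right; right; split=> //; exists p; split; first lia.
  by right; exists true; case: p; rewrite /=; lia.
right; left; split=> //; exists true; split; first lia.
by right; exists true; rewrite /=; lia.
Qed.

Lemma quadrant_secures_draw m n p t : (0 < m)%N -> (0 < n)%N -> ~~ (odd m && odd n) ->
  0 <= bsign p * sign_game_outcome (Kmn_adj m n) t.
Proof.
move=> m_gt0 n_gt0 not_odd; apply: (Kmn_outcome_secured (Inv := quadrant_inv p)).
- by [].
- exact: quadrant_inv_swap.
- exact: quadrant_final.
- exact: quadrant_reply.
- by case: (t == p); [exact: quadrant_start | split => //; left].
Qed.

Theorem theorem4 (m n : nat) (P_first : bool) :
  (0 < m)%N -> (0 < n)%N ->
  sign_game_outcome (Kmn_adj m n) P_first =
    (if odd m && odd n then (if P_first then -1 else 1) else 0).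
Proof.
move=> m_gt0 n_gt0.
have := sign_game_outcome_bounds (Kmn_adj m n) P_first.
case: ifP => [/andP[om on] | /negbT not_odd] bounds.
  have := pairing_secures_win (~~ P_first) om on; rewrite negbK.
  by case: P_first bounds => /=; lia.
have := quadrant_secures_draw true P_first m_gt0 n_gt0 not_odd.
have := quadrant_secures_draw false P_first m_gt0 n_gt0 not_odd.
by rewrite /=; lia.
Qed.
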